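(* Let $d\ge3$, $h\ge1$, $1\le n\le h$, and let $j_1\ne j_2$ be two vertices at distance $n$ from the root that have the same parent. Then the order of $\bar{\mathbf{x}}_{j_1}-\bar{\mathbf{x}}_{j_2}$ in $G(d,h)$ is $\theta(d,h+2-n)$, where $\theta(d,m):=\frac{(d-1)^m-1}{d-2}$.
   Context: Let $\mathcal{T}(d,h)$ be the rooted tree in which the root $0$ has $d$ children, every vertex at distance $1,\dots,h-1$ from the root has $d-1$ children, and the vertices at distance $h$ are leaves. Let $V$ be its vertex set, $A$ its adjacency matrix, $\Delta := dI-A$, and $\Lambda\subset\mathbb{Z}^V$ the lattice spanned by the rows of $\Delta$. Then $G(d,h):=\mathbb{Z}^V/\Lambda$; $\{\mathbf{x}_i:i\in V\}$ is the standard basis of $\mathbb{Z}^V$ and $\bar{\mathbf{v}}$ denotes the image of $\mathbf{v}\in\mathbb{Z}^V$ in $G(d,h)$. *)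

From mathcomp Require Import all_boot all_order all_algebra.
Set Implicit Arguments. Unset Strict Implicit. Unset Printing Implicit Defensive.
Import Order.TTheory GRing.Theory Num.Theory.

(* Vertices of T(d,h): a vertex at depth k is encoded by its path of child
   indices (c_0, ..., c_{k-1}) from the root, with c_0 < d (the root has d
   children) and c_i < d-1 for i >= 1 (other internal vertices have d-1
   children); entries at positions >= k are normalised to 0. *)
Definition vraw (d h : nat) := ('I_h.+1 * {ffun 'I_h -> 'I_d})%type.

Definition vvalid (d h : nat) (x : vraw d h) : bool :=
  [forall i : 'I_h, ((x.1 <= i)%N ==> (val (x.2 i) == 0%N))
                    && ((1 <= i)%N ==> (val (x.2 i) < d.-1)%N)].

Definition vertex (d h : nat) := {x : vraw d h | vvalid x}.

Definition depth d h (v : vertex d h) : nat := val (val v).1.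
Definition lab d h (v : vertex d h) : {ffun 'I_h -> 'I_d} := (val v).2.

Definition parentb d h (u v : vertex d h) : bool :=
  (depth v == (depth u).+1) &&
  [forall i : 'I_h, (i < depth u)%N ==> (lab v i == lab u i)].

Definition adj d h (u v : vertex d h) : bool := parentb u v || parentb v u.

Definition Delta d h (u v : vertex d h) : int :=
  ((if u == v then d%:Z else 0) - (if adj u v then 1 else 0))%R.

Definition inLattice d h (z : vertex d h -> int) : Prop :=
  exists c : vertex d h -> int,
    forall v, z v = (\sum_(u : vertex d h) c u * Delta u v)%R.

Definition xb d h (i : vertex d h) : vertex d h -> int :=
  fun v => if v == i then 1%R else 0%R.

(* n is the order of the class of z in G(d,h) = Z^V / Lambda *)
Definition is_order_in_G d h (z : vertex d h -> int) (n : nat) : Prop :=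
  (0 < n)%N /\ inLattice (fun v => (z v *+ n)%R) /\
  forall k : nat, (0 < k)%N -> inLattice (fun v => (z v *+ k)%R) -> (n <= k)%N.

(* theta(d,m) = ((d-1)^m - 1)/(d-2) (exact division for d >= 3) *)
Definition theta (d m : nat) : nat := ((d.-1) ^ m).-1 %/ (d - 2).

From mathcomp Require Import all_boot all_order all_algebra.
From mathcomp Require Import zify.
Set Implicit Arguments. Unset Strict Implicit. Unset Printing Implicit Defensive.
Import Order.TTheory GRing.Theory Num.Theory.

(* For a vertex j at depth n >= 1 with parent p, let the potential W_j ([pot j])
   be theta(d, h+1-|u|) on the vertices u of the subtree rooted at j and 0
   elsewhere.  The identity d theta(m+1) - (d-1) theta(m) = theta(m+2) gives
   Delta W_j = theta(h+2-n) x_j - theta(h+1-n) x_p.  For siblings j1, j2 the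
   parent terms cancel, so Delta (W_j1 - W_j2) = theta(h+2-n) (x_j1 - x_j2),
   which lies in Lambda because Delta is symmetric.
   Conversely, if k (x_j1 - x_j2) is in Lambda, pairing it with W_a - W_b for
   siblings a, b of j1 shows that theta(h+2-n) divides
   k ((W_a - W_b)(j1) - (W_a - W_b)(j2)).  With (a, b) = (j1, j2) this is
   2 k theta(h+1-n); with a = j1 and b a third sibling it is k theta(h+1-n).
   Consecutive values of theta are coprime, a third sibling exists when d >= 4,
   and for d = 3 every theta(m+1) = 2^(m+1) - 1 is odd. *)

Section Theta.
Variable d : nat.
Hypothesis d_ge3 : (3 <= d)%N.

Fixpoint theta_rec (a : nat) : nat :=
  if a is a'.+1 then d.-1 * theta_rec a' + 1 else 0.

Lemma theta_recE a : theta d a = theta_rec a.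
Proof.
have closed_form b : (d - 2) * theta_rec b + 1 = d.-1 ^ b.
  by elim: b => [|b IH]; rewrite ?expn0 ?muln0 // expnS -IH /=; nia.
by rewrite /theta -closed_form addn1 /= mulKn //; lia.
Qed.

Lemma theta0 : theta d 0 = 0.
Proof. by rewrite theta_recE. Qed.

Lemma thetaS a : theta d a.+1 = d.-1 * theta d a + 1.
Proof. by rewrite !theta_recE. Qed.

Lemma theta_gt0 a : (0 < theta d a.+1)%N.
Proof. by rewrite thetaS addn1. Qed.

Lemma coprime_thetaS a : coprime (theta d a.+1) (theta d a).
Proof.
by rewrite thetaS /coprime -gcdn_modl -modnDml modnMl add0n gcdn_modl gcd1n.
Qed.

Lemma theta_balance a :
  (d%:Z * (theta d a.+1)%:Z - (d.-1 * theta d a)%:Z = (theta d a.+2)%:Z)%R.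
Proof. rewrite [theta d a.+2]thetaS thetaS; lia. Qed.

Lemma odd_thetaS a : odd d -> odd (theta d a.+1).
Proof. by rewrite thetaS addn1 /= oddM; case: d d_ge3 => // d' _ /= /negbTE ->. Qed.

End Theta.

Section Vertices.
Variables d h : nat.
Implicit Types u v j : vertex d h.

Lemma lab_ge_depth v (i : 'I_h) : (depth v <= i)%N -> val (lab v i) = 0.
Proof. by move=> le_vi; have /forallP/(_ i)/andP[/implyP/(_ le_vi)/eqP] := valP v. Qed.

Lemma lab_lt v (i : 'I_h) : (1 <= i)%N -> (val (lab v i) < d.-1)%N.
Proof. by move=> i_ge1; have /forallP/(_ i)/andP[_ /implyP/(_ i_ge1)] := valP v. Qed.

Lemma depth_le v : (depth v <= h)%N.
Proof. exact: (ltn_ord (val v).1). Qed.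

Lemma eq_vertex u v : depth u = depth v ->
  (forall i : 'I_h, (i < depth u)%N -> lab u i = lab v i) -> u = v.
Proof.
move=> eq_depth eq_lab; apply: val_inj.
rewrite [val u]surjective_pairing [val v]surjective_pairing.
congr pair; first exact: val_inj.
apply/ffunP => i; case: (ltnP i (depth u)) => hi; first exact: eq_lab.
by apply: val_inj; rewrite [LHS]lab_ge_depth // [RHS]lab_ge_depth // -eq_depth.
Qed.

Lemma parentb_depth u v : parentb u v -> depth v = (depth u).+1.
Proof. by case/andP=> /eqP. Qed.

Lemma parentb_lab u v (i : 'I_h) : parentb u v -> (i < depth u)%N -> lab v i = lab u i.
Proof. by case/andP=> _ /forallP/(_ i)/implyP H /H/eqP. Qed.

Lemma parentb_uniq u u' v : parentb u v -> parentb u' v -> u = u'.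
Proof.
move=> uv u'v; have eq_depth : depth u = depth u'.
  by apply/succn_inj; rewrite -(parentb_depth uv) -(parentb_depth u'v).
apply: eq_vertex => // i hi.
by rewrite -(parentb_lab uv hi) (parentb_lab u'v) // -eq_depth.
Qed.

Lemma siblings_depth p u v : parentb p u -> parentb p v -> depth u = depth v.
Proof. by move=> /parentb_depth -> /parentb_depth ->. Qed.

Lemma parentb_asym u v : parentb u v -> ~~ parentb v u.
Proof.
move/parentb_depth=> duv; apply/negP=> /parentb_depth; lia.
Qed.

Lemma exists_parent v : (0 < depth v)%N -> exists u, parentb u v.
Proof.
move=> v_gt0; have i0 : 'I_h := Ordinal (leq_trans v_gt0 (depth_le v)).
have d_gt0 : (0 < d)%N := leq_ltn_trans (leq0n _) (ltn_ord (lab v i0)).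
pose r : vraw d h := (inord (depth v).-1,
   [ffun i : 'I_h => if (i < (depth v).-1)%N then lab v i else Ordinal d_gt0]).
have r_depth : val r.1 = (depth v).-1 by rewrite /= inordK //; have := depth_le v; lia.
have r_valid : vvalid r.
  apply/forallP => i; rewrite r_depth ffunE.
  case: ifP => hi; apply/andP; split; apply/implyP => // hyp.
  - lia.
  - exact: lab_lt.
  - exact: leq_ltn_trans (leq0n _) (lab_lt v hyp).
exists (exist _ r r_valid); apply/andP; split.
  by rewrite /depth /= r_depth prednK.
apply/forallP => i; apply/implyP; rewrite /depth /= r_depth => hi.
by rewrite /lab /= ffunE hi.
Qed.

Section Children.
Variable v : vertex d h.
Hypothesis v_lt_h : (depth v < h)%N.

Definition child_raw (c : 'I_d.-1) : vraw d h := (inord (depth v).+1,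
  [ffun i : 'I_h => if i == depth v :> nat then widen_ord (leq_pred d) c else lab v i]).

Lemma child_raw_depth c : val (child_raw c).1 = (depth v).+1.
Proof. by rewrite /= inordK. Qed.

Lemma child_raw_valid c : vvalid (child_raw c).
Proof.
apply/forallP => i; rewrite child_raw_depth ffunE.
case: ifP => /eqP hi; apply/andP; split; apply/implyP => hyp.
- lia.
- exact: (ltn_ord c).
- by rewrite lab_ge_depth //; lia.
- exact: lab_lt.
Qed.

Definition child c : vertex d h := exist _ (child_raw c) (child_raw_valid c).

Lemma child_depth c : depth (child c) = (depth v).+1.
Proof. exact: child_raw_depth. Qed.

Lemma child_lab c i : lab (child c) i =
  if i == depth v :> nat then widen_ord (leq_pred d) c else lab v i.
Proof. by rewrite /lab ffunE. Qed.

Lemma parentb_child c : parentb v (child c).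
Proof.
apply/andP; split; first by rewrite child_depth.
by apply/forallP => i; apply/implyP => hi; rewrite child_lab ltn_eqF.
Qed.

Lemma child_inj : injective child.
Proof.
move=> c c' /(congr1 (fun u => val (lab u (Ordinal v_lt_h)))).
by rewrite !child_lab /= eqxx => eq_c; apply: val_inj.
Qed.

Lemma parentb_codom_child u : (0 < depth v)%N -> parentb v u -> u \in codom child.
Proof.
move=> v_gt0 vu; pose i : 'I_h := Ordinal v_lt_h.
apply/codomP; exists (Ordinal (lab_lt u (i := i) v_gt0)).
apply: eq_vertex => [|k hk]; first by rewrite child_depth (parentb_depth vu).
rewrite child_lab; case: eqP => [ik | /eqP ik].
  by apply: val_inj; congr (val (lab u _)); apply: val_inj; rewrite /= ik.
by rewrite (parentb_lab vu) //; move: hk; rewrite (parentb_depth vu); lia.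
Qed.

Lemma card_children : (0 < depth v)%N -> #|[pred u | parentb v u]| = d.-1.
Proof.
move=> v_gt0; rewrite -[RHS]card_ord -(card_codom child_inj).
apply: eq_card => u; rewrite inE; apply/idP/idP; first exact: parentb_codom_child.
by case/codomP=> c ->; apply: parentb_child.
Qed.

Lemma exists_third_child a b : (4 <= d)%N -> exists u, [&& parentb v u, u != a & u != b].
Proof.
move=> d_ge4; have : ~~ (codom child \subset [set a; b]).
  apply/negP => /subset_leq_card; rewrite (card_codom child_inj) card_ord cards2.
  by case: (a != b); lia.
case/subsetPn => _ /codomP[c ->]; rewrite !inE negb_or => /andP[ne_a ne_b].
by exists (child c); rewrite parentb_child ne_a ne_b.
Qed.

End Children.

Definition in_subtree j v := (depth j <= depth v)%N &&
  [forall i : 'I_h, (i < depth j)%N ==> (lab v i == lab j i)].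

Lemma in_subtree_refl j : in_subtree j j.
Proof. by rewrite /in_subtree leqnn; apply/forallP => i; apply/implyP. Qed.

Lemma in_subtree_depth j v : in_subtree j v -> (depth j <= depth v)%N.
Proof. by case/andP. Qed.

Lemma in_subtree_eq j v : in_subtree j v -> depth v = depth j -> v = j.
Proof.
case/andP=> _ /forallP eq_lab eq_depth; apply: eq_vertex => // i hi.
by apply/eqP; apply: (implyP (eq_lab i)); rewrite -eq_depth.
Qed.

Lemma in_subtree_parentb j u v :
  parentb u v -> in_subtree j v = (v == j) || in_subtree j u.
Proof.
move=> uv; have duv := parentb_depth uv.
have [-> | ne_vj] /= := eqVneq v j; first exact: in_subtree_refl.
have [lt_uj | le_ju] := ltnP (depth u) (depth j).
  apply/idP/idP => [jv | /in_subtree_depth]; last lia.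
  by case/eqP: ne_vj; apply: in_subtree_eq => //; have := in_subtree_depth jv; lia.
rewrite /in_subtree le_ju ltnW ?duv //=; apply: eq_forallb => i.
by case: ltnP => //= hi; rewrite (parentb_lab uv) //; lia.
Qed.

Lemma parentb_notin_subtree u v : parentb u v -> ~~ in_subtree v u.
Proof. by move/parentb_depth=> duv; apply/negP => /in_subtree_depth; lia. Qed.

End Vertices.

Section Laplacian.
Variables d h : nat.
Implicit Types u v : vertex d h.
Local Open Scope ring_scope.

Lemma Delta_sym u v : Delta u v = Delta v u.
Proof. by rewrite /Delta eq_sym /adj orbC. Qed.

Lemma sum_Delta v (f : vertex d h -> int) :
  \sum_u Delta v u * f u =
    d%:Z * f v - \sum_(u | parentb v u) f u - \sum_(u | parentb u v) f u.
Proof.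
rewrite /Delta; under eq_bigr => u _ do rewrite mulrBl.
rewrite sumrB (bigD1 v) //= eqxx big1 => [|u /negbTE]; last first.
  by rewrite eq_sym => ->; rewrite mul0r.
rewrite addr0 !(big_mkcond (fun u => parentb _ _)) -addrA -opprD -big_split /=.
congr (_ - _); apply: eq_bigr => u _; rewrite /adj.
have [vu | _] /= := boolP (parentb v u); last by case: parentb; rewrite ?mul1r ?mul0r add0r.
by rewrite (negbTE (parentb_asym vu)) mul1r addr0.
Qed.

Lemma inLattice_Delta (z f : vertex d h -> int) :
  (forall v, z v = \sum_u Delta v u * f u) -> inLattice z.
Proof.
by move=> zE; exists f => v; rewrite zE; apply: eq_bigr => u _; rewrite Delta_sym mulrC.
Qed.

Lemma inLattice_dvdz_pairing (z f : vertex d h -> int) (T : int) :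
  inLattice z -> (forall u, (T %| \sum_v Delta u v * f v)%Z) ->
  (T %| \sum_v z v * f v)%Z.
Proof.
case=> c zE T_dvd; under eq_bigr => v _ do rewrite zE mulr_suml.
rewrite exchange_big /=; apply: rpred_sum => u _.
under eq_bigr => v _ do rewrite -mulrA.
by rewrite -mulr_sumr dvdz_mull.
Qed.

Lemma sum_xbB_mul (j1 j2 : vertex d h) (k : nat) (f : vertex d h -> int) :
  \sum_v ((xb j1 v - xb j2 v) *+ k) * f v = (f j1 - f j2) *+ k.
Proof.
have sum_xb_mul j : \sum_v xb j v * f v = f j.
  rewrite (bigD1 j) //= /xb eqxx mul1r big1 ?addr0 // => v /negbTE ->.
  by rewrite mul0r.
under eq_bigr do rewrite mulrnAl mulrBl.
by rewrite sumrMnl sumrB !sum_xb_mul.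
Qed.

End Laplacian.

Definition pot d h (j u : vertex d h) : int :=
  if in_subtree j u then Posz (theta d (h - depth u).+1) else 0%R.

Lemma pot_sibling d h (p j u : vertex d h) : parentb p j -> parentb p u ->
  pot j u = if j == u then Posz (theta d (h - depth j).+1) else 0%R.
Proof.
move=> p_j p_u; rewrite /pot; case: eqVneq => [<- | ne_ju]; first by rewrite in_subtree_refl.
case: ifP => // /in_subtree_eq/(_ (siblings_depth p_u p_j)) eq_uj.
by rewrite eq_uj eqxx in ne_ju.
Qed.

Section Potential.
Variables (d h : nat) (j p : vertex d h).
Hypotheses (d_ge3 : (3 <= d)%N) (p_j : parentb p j).
Implicit Types u v : vertex d h.
Local Open Scope ring_scope.

Lemma sum_children_pot_in v : in_subtree j v ->
  \sum_(u | parentb v u) pot j u = (d.-1 * theta d (h - depth v))%:Z.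
Proof.
move=> jv; have [v_lt_h | v_ge_h] := ltnP (depth v) h; last first.
  rewrite big_pred0 => [|u]; last by apply/negP => /parentb_depth; have := depth_le u; lia.
  have -> : (h - depth v = 0)%N by lia.
  by rewrite theta0 // muln0.
rewrite (eq_bigr (fun=> (theta d (h - depth v))%:Z)) => [|u vu]; last first.
  by rewrite /pot (in_subtree_parentb j vu) jv orbT (parentb_depth vu) subnSK.
rewrite (eq_bigl (mem [pred u | parentb v u])) // sumr_const -mulr_natl natz -PoszM.
rewrite card_children //; apply: leq_trans (in_subtree_depth jv).
by rewrite (parentb_depth p_j).
Qed.

Lemma sum_children_pot_out v : ~~ in_subtree j v ->
  \sum_(u | parentb v u) pot j u =
    if v == p then (theta d (h - depth j).+1)%:Z else 0.
Proof.
move=> jNv.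
rewrite (eq_bigr (fun u => if u == j then (theta d (h - depth j).+1)%:Z else 0)) => [|u vu].
  rewrite -big_mkcondr /=; have [-> | ne_vp] := eqVneq v p.
    by rewrite (big_pred1 j) // => u /=; apply/andP/eqP => [[] | ->] // _ /eqP.
  rewrite big_pred0 // => u /=; apply/negP => /andP[vu /eqP eq_uj].
  by case/eqP: ne_vp; apply: parentb_uniq p_j; rewrite -eq_uj.
by rewrite /pot (in_subtree_parentb j vu) (negbTE jNv) orbF; case: eqP => // ->.
Qed.

Lemma sum_parent_pot v :
  \sum_(u | parentb u v) pot j u =
    if in_subtree j v && (v != j) then (theta d (h - depth v).+2)%:Z else 0.
Proof.
have [v0 | v_gt0] := posnP (depth v).
  rewrite big_pred0 => [|u]; last by apply/negP => /parentb_depth; lia.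
  suff -> : in_subtree j v = false by [].
  by apply/negP => /in_subtree_depth; rewrite (parentb_depth p_j) v0.
have [q qv] := exists_parent v_gt0.
rewrite (big_pred1 q) => [|u]; last by apply/idP/eqP => [/parentb_uniq/(_ qv) | ->].
have -> : ((h - depth v).+2 = (h - depth q).+1)%N.
  by have := depth_le v; rewrite (parentb_depth qv); lia.
rewrite /pot (in_subtree_parentb j qv).
have [jq | _] := boolP (in_subtree j q); last by rewrite orbF andbN.
suff -> : v != j by rewrite orbT.
apply: contraTneq jq => eq_vj; move: qv; rewrite eq_vj => /parentb_uniq/(_ p_j) ->.
exact: parentb_notin_subtree.
Qed.

Lemma Delta_pot v :
  \sum_u Delta v u * pot j u =
    xb j v *+ theta d (h - depth j).+2 - xb p v *+ theta d (h - depth j).+1.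
Proof.
rewrite sum_Delta sum_parent_pot /xb.
have [jv | jNv] := boolP (in_subtree j v); last first.
  have ne_vj : v != j by apply: contraNneq jNv => ->; apply: in_subtree_refl.
  rewrite sum_children_pot_out // /pot (negbTE jNv) (negbTE ne_vj) mulr0.
  by case: eqP => _; rewrite /= ?mul0rn ?natz ?subr0.
have ne_vp : v != p by apply: contraTneq jv => ->; apply: parentb_notin_subtree.
rewrite sum_children_pot_in // /pot jv (negbTE ne_vp) mul0rn subr0 /= theta_balance //.
by have [<- | _] := eqVneq j v; rewrite /= ?subr0 ?natz ?mul0rn ?subrr.
Qed.

End Potential.

Section Siblings.
Variables (d h : nat) (p a b : vertex d h).
Hypotheses (d_ge3 : (3 <= d)%N) (p_a : parentb p a) (p_b : parentb p b).
Local Open Scope ring_scope.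

Lemma Delta_pot_siblings v :
  \sum_u Delta v u * (pot a u - pot b u) =
    (xb a v - xb b v) *+ theta d (h - depth a).+2.
Proof.
under eq_bigr do rewrite mulrBr.
rewrite sumrB (Delta_pot d_ge3 p_a) (Delta_pot d_ge3 p_b) (siblings_depth p_b p_a).
by rewrite mulrnBl opprB addrA subrK.
Qed.

Lemma inLattice_theta_siblings :
  inLattice (fun v => (xb a v - xb b v) *+ theta d (h - depth a).+2).
Proof.
by apply: (inLattice_Delta (f := fun u => pot a u - pot b u)) => v; rewrite Delta_pot_siblings.
Qed.

Lemma dvdz_pot_pairing (j1 j2 : vertex d h) (k : nat) :
  inLattice (fun v => (xb j1 v - xb j2 v) *+ k) ->
  ((theta d (h - depth a).+2)%:Z %| (pot a j1 - pot b j1 - (pot a j2 - pot b j2)) *+ k)%Z.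
Proof.
move=> lat; rewrite -(sum_xbB_mul _ _ _ (fun u => pot a u - pot b u)).
apply: inLattice_dvdz_pairing lat _ => u.
by rewrite Delta_pot_siblings -mulr_natr natz dvdz_mull.
Qed.

End Siblings.

Section Order.
Variables (d h : nat) (p a b : vertex d h).
Hypotheses (d_ge3 : (3 <= d)%N) (p_a : parentb p a) (p_b : parentb p b) (ne_ab : a != b).
Local Open Scope ring_scope.

Lemma theta_dvd_double k :
  inLattice (fun v => (xb a v - xb b v) *+ k) -> (theta d (h - depth a).+2 %| 2 * k)%N.
Proof.
move/(dvdz_pot_pairing d_ge3 p_a p_b).
rewrite (pot_sibling p_a p_a) (pot_sibling p_b p_a).
rewrite (pot_sibling p_a p_b) (pot_sibling p_b p_b).
rewrite !eqxx (negbTE ne_ab) eq_sym (negbTE ne_ab) (siblings_depth p_b p_a).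
rewrite subr0 sub0r opprK -PoszD -mulr_natr natz -PoszM dvdzE /=.
by rewrite addnn -mul2n mulnAC Gauss_dvdl // coprime_thetaS.
Qed.

Lemma theta_dvd_of_third_sibling c k : parentb p c -> c != a -> c != b ->
  inLattice (fun v => (xb a v - xb b v) *+ k) -> (theta d (h - depth a).+2 %| k)%N.
Proof.
move=> p_c ne_ca ne_cb /(dvdz_pot_pairing d_ge3 p_a p_c).
rewrite (pot_sibling p_a p_a) (pot_sibling p_c p_a).
rewrite (pot_sibling p_a p_b) (pot_sibling p_c p_b).
rewrite eqxx (negbTE ne_ca) (negbTE ne_cb) (negbTE ne_ab).
by rewrite !subr0 -mulr_natr natz -PoszM dvdzE /= Gauss_dvdr // coprime_thetaS.
Qed.

End Order.

Theorem proposition7p6 (d h n : nat) (j1 j2 : vertex d h) :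
  (3 <= d)%N -> (1 <= h)%N -> (1 <= n)%N -> (n <= h)%N ->
  depth j1 = n -> depth j2 = n -> j1 <> j2 ->
  (exists p : vertex d h, parentb p j1 && parentb p j2) ->
  is_order_in_G (fun v => (xb j1 v - xb j2 v)%R) (theta d (h + 2 - n)).
Proof.
move=> d_ge3 _ _ n_le_h d_j1 _ /eqP ne_j12 [p /andP[p_j1 p_j2]].
have -> : (h + 2 - n = (h - depth j1).+2)%N by rewrite d_j1; lia.
split; first exact: theta_gt0.
split; first exact: inLattice_theta_siblings d_ge3 p_j1 p_j2.
move=> k k_gt0 lat; apply: dvdn_leq k_gt0 _.
have [d3 | d_ne3] := eqVneq d 3.
  have := theta_dvd_double d_ge3 p_j1 p_j2 ne_j12 lat.
  by rewrite Gauss_dvdr // coprimen2 odd_thetaS // d3.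
have p_lt_h : (depth p < h)%N by have := parentb_depth p_j1; lia.
have [|u /and3P[p_u ne_u1 ne_u2]] := exists_third_child p_lt_h j1 j2; first lia.
exact: theta_dvd_of_third_sibling d_ge3 p_j1 p_j2 ne_j12 u k p_u ne_u1 ne_u2 lat.
Qed.
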